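(* Let $\mathbb{C}$ be a regular majority category. For any regular epimorphism $f:X\to Y$ in $\mathbb{C}$ and any reflexive relations $R,S$ on $X$, $f(R\cap S)=f(R)\cap f(S)$.
   Context: A category is regular if it has finite limits and coequalizers of kernel pairs and regular epimorphisms are pullback-stable; morphisms factor as regular epi followed by mono. A relation on $X$ is a subobject of $X\times X$, reflexive if the diagonal factors through it; $\cap$ is intersection (pullback) of subobjects. $f(R)$ denotes the image of $R$ under $f\times f$ (mono part of the regular epi–mono factorization of $(f\times f)r$ for $r$ representing $R$). For $w:S\to W$ and subobject $A$ of $W$, $w\in_S A$ means $w$ factors through a representative of $A$. A ternary relation $R\leqslant X\times Y\times Z$ is majority-selecting if for all $S$ and $x,x':S\to X$, $y,y':S\to Y$, $z,z':S\to Z$: $(x,y,z')\in_S R$, $(x,y',z)\in_S R$, $(x',y,z)\in_S R$ imply $(x,y,z)\in_S R$. A category with products is a majority category if all its ternary relations are majority-selecting. *)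

Record Category := {
  ob :> Type;
  hom : ob -> ob -> Type;
  comp : forall {a b c : ob}, hom b c -> hom a b -> hom a c;
  idm : forall a : ob, hom a a;
  comp_assoc : forall (a b c d : ob) (h : hom c d) (g : hom b c) (f : hom a b),
      comp h (comp g f) = comp (comp h g) f;
  comp_id_l : forall (a b : ob) (f : hom a b), comp (idm b) f = f;
  comp_id_r : forall (a b : ob) (f : hom a b), comp f (idm a) = f
}.

Arguments comp {c a b c0} _ _ : rename.
Arguments idm {c} a : rename.
Notation "g \o f" := (comp g f) (at level 40, left associativity).

Section Cat.
Context {C : Category}.

Definition mono {A B : C} (m : hom C A B) : Prop :=
  forall (Z : C) (g h : hom C Z A), m \o g = m \o h -> g = h.

Definition is_terminal (T : C) : Prop :=
  forall A : C, exists t : hom C A T, forall t' : hom C A T, t' = t.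

Definition is_product {A B P : C} (p1 : hom C P A) (p2 : hom C P B) : Prop :=
  forall (Q : C) (q1 : hom C Q A) (q2 : hom C Q B),
    exists u : hom C Q P, p1 \o u = q1 /\ p2 \o u = q2 /\
      forall v : hom C Q P, p1 \o v = q1 -> p2 \o v = q2 -> v = u.

Definition is_product3 {A B D P : C}
    (p1 : hom C P A) (p2 : hom C P B) (p3 : hom C P D) : Prop :=
  forall (Q : C) (q1 : hom C Q A) (q2 : hom C Q B) (q3 : hom C Q D),
    exists u : hom C Q P, p1 \o u = q1 /\ p2 \o u = q2 /\ p3 \o u = q3 /\
      forall v : hom C Q P, p1 \o v = q1 -> p2 \o v = q2 -> p3 \o v = q3 -> v = u.

Definition is_equalizer {A B E : C} (f g : hom C A B) (e : hom C E A) : Prop :=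
  f \o e = g \o e /\
  forall (Q : C) (q : hom C Q A), f \o q = g \o q ->
    exists u : hom C Q E, e \o u = q /\ forall v : hom C Q E, e \o v = q -> v = u.

Definition is_pullback {A B D P : C} (f : hom C A D) (g : hom C B D)
    (p1 : hom C P A) (p2 : hom C P B) : Prop :=
  f \o p1 = g \o p2 /\
  forall (Q : C) (q1 : hom C Q A) (q2 : hom C Q B), f \o q1 = g \o q2 ->
    exists u : hom C Q P, p1 \o u = q1 /\ p2 \o u = q2 /\
      forall v : hom C Q P, p1 \o v = q1 -> p2 \o v = q2 -> v = u.

Definition is_coequalizer {A B Q : C} (u v : hom C A B) (q : hom C B Q) : Prop :=
  q \o u = q \o v /\
  forall (Z : C) (z : hom C B Z), z \o u = z \o v ->
    exists w : hom C Q Z, w \o q = z /\ forall w' : hom C Q Z, w' \o q = z -> w' = w.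

Definition regular_epi {B Q : C} (q : hom C B Q) : Prop :=
  exists (A : C) (u v : hom C A B), is_coequalizer u v q.

Definition has_finite_limits : Prop :=
  (exists T : C, is_terminal T) /\
  (forall A B : C, exists (P : C) (p1 : hom C P A) (p2 : hom C P B), is_product p1 p2) /\
  (forall (A B : C) (f g : hom C A B), exists (E : C) (e : hom C E A), is_equalizer f g e) /\
  (forall (A B D : C) (f : hom C A D) (g : hom C B D),
      exists (P : C) (p1 : hom C P A) (p2 : hom C P B), is_pullback f g p1 p2).

Definition regular_category : Prop :=
  has_finite_limits /\
  (forall (A B K : C) (f : hom C A B) (k1 k2 : hom C K A),
      is_pullback f f k1 k2 -> exists (Q : C) (q : hom C A Q), is_coequalizer k1 k2 q) /\
  (forall (A B D P : C) (g : hom C A D) (e : hom C B D)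
          (p1 : hom C P A) (p2 : hom C P B),
      regular_epi e -> is_pullback g e p1 p2 -> regular_epi p1) /\
  (forall (A B : C) (f : hom C A B),
      exists (I : C) (e : hom C A I) (m : hom C I B), regular_epi e /\ mono m /\ m \o e = f).

Definition in_sub {S W M : C} (w : hom C S W) (m : hom C M W) : Prop :=
  exists h : hom C S M, m \o h = w.

Definition same_sub {W M N : C} (m : hom C M W) (n : hom C N W) : Prop :=
  in_sub m n /\ in_sub n m.

Definition in_rel3 {X Y Z P R S : C}
    (p1 : hom C P X) (p2 : hom C P Y) (p3 : hom C P Z) (r : hom C R P)
    (x : hom C S X) (y : hom C S Y) (z : hom C S Z) : Prop :=
  exists t : hom C S P, p1 \o t = x /\ p2 \o t = y /\ p3 \o t = z /\ in_sub t r.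

Definition majority_selecting {X Y Z P R : C}
    (p1 : hom C P X) (p2 : hom C P Y) (p3 : hom C P Z) (r : hom C R P) : Prop :=
  forall (S : C) (x x' : hom C S X) (y y' : hom C S Y) (z z' : hom C S Z),
    in_rel3 p1 p2 p3 r x y z' -> in_rel3 p1 p2 p3 r x y' z ->
    in_rel3 p1 p2 p3 r x' y z -> in_rel3 p1 p2 p3 r x y z.

Definition majority_category : Prop :=
  (exists T : C, is_terminal T) /\
  (forall A B : C, exists (P : C) (p1 : hom C P A) (p2 : hom C P B), is_product p1 p2) /\
  forall (X Y Z P : C) (p1 : hom C P X) (p2 : hom C P Y) (p3 : hom C P Z),
    is_product3 p1 p2 p3 ->
    forall (R : C) (r : hom C R P), mono r -> majority_selecting p1 p2 p3 r.

Definition reflexive_rel {X PX R : C} (pi1 pi2 : hom C PX X) (r : hom C R PX) : Prop :=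
  exists d : hom C X PX, pi1 \o d = idm X /\ pi2 \o d = idm X /\ in_sub d r.

End Cat.

Arguments is_terminal {C} T.
Arguments has_finite_limits C : clear implicits.
Arguments regular_category C : clear implicits.
Arguments majority_category C : clear implicits.

(* Both inclusions are checked on generalized elements, up to regular-epi covers.
   The inclusion f(R /\ S) <= f(R) /\ f(S) holds in any category.  Conversely, an element of
   f(R) /\ f(S) lifts locally to (x, y) in R and (x', y') in S with f x = f x', f y' = f y,
   and it suffices to find, locally, (w, u) in R /\ S with f w = f x and f u = f y.

   This rests on an interpolation property of regular majority categories: for reflexive
   relations A, B, C, if x A z, x B y and y C z then, locally, there is w with x (A /\ B) w
   and w (A /\ C) z.  Indeed the image of the relation
     { (x1, (x2, x3), x4) | exists w, x2 A w, x1 B w, w A x3, w C x4 }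
   contains (x, (x, z), x), (x, (y, y), z) and (z, (x, z), z), witnessed by w = x, y, z, so
   by majority it contains (x, (x, z), z).  Writing ~ for the kernel pair of f, interpolating
   with (A, B, C) = (R, ~, S;~) at (x, x', y) gives w, then with (R, S, ~) at (w, v, y),
   where w S v ~ y, gives u. *)


Ltac assoc_r := repeat rewrite <- comp_assoc.

Section Morphisms.
Context {C : Category}.

Lemma comp_eq_r {A B D E : C} (g : hom C B D) (f : hom C A B) (h : hom C A D) (k : hom C E A) :
  g \o f = h -> g \o (f \o k) = h \o k.
Proof. intros H. rewrite comp_assoc, H. reflexivity. Qed.

Lemma regular_epi_is_epi {A B D : C} (e : hom C A B) (g h : hom C B D) :
  regular_epi e -> g \o e = h \o e -> g = h.
Proof.
  intros [E [u [v [Heq Hcoeq]]]] H.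
  destruct (Hcoeq _ (g \o e)) as [w [_ Hw]].
  { assoc_r. rewrite Heq. reflexivity. }
  rewrite (Hw g eq_refl), (Hw h (eq_sym H)). reflexivity.
Qed.

Lemma regular_epi_mono_diagonal {A B M W : C} (e : hom C A B) (m : hom C M W)
    (a : hom C A M) (b : hom C B W) :
  regular_epi e -> mono m -> m \o a = b \o e -> exists d, m \o d = b /\ d \o e = a.
Proof.
  intros He Hm H. pose proof He as [E [u [v [Heq Hcoeq]]]].
  destruct (Hcoeq _ a) as [d [Hd _]].
  { apply Hm. rewrite !comp_assoc, H. assoc_r. rewrite Heq. reflexivity. }
  exists d. split; [|exact Hd].
  apply (regular_epi_is_epi e); [exact He|]. assoc_r. rewrite Hd. exact H.
Qed.

Lemma in_sub_regular_epi_cancel {A B M W : C} (e : hom C A B) (m : hom C M W) (b : hom C B W) :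
  regular_epi e -> mono m -> in_sub (b \o e) m -> in_sub b m.
Proof.
  intros He Hm [a Ha].
  destruct (regular_epi_mono_diagonal e m a b He Hm Ha) as [d [Hd _]].
  exists d. exact Hd.
Qed.

Lemma in_sub_comp {S W M N : C} (t : hom C S W) (m : hom C M W) (q : hom C N M) :
  in_sub t (m \o q) -> in_sub t m.
Proof. intros [h Hh]. exists (q \o h). rewrite comp_assoc. exact Hh. Qed.

Lemma in_sub_pullback {S W M N P : C} (t : hom C S W) (m : hom C M W) (n : hom C N W)
    (p1 : hom C P M) (p2 : hom C P N) :
  is_pullback m n p1 p2 -> in_sub t m -> in_sub t n -> in_sub t (m \o p1).
Proof.
  intros [_ Hpb] [a Ha] [b Hb].
  destruct (Hpb _ a b) as [h [Hh1 _]]; [congruence|].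
  exists h. rewrite <- comp_assoc, Hh1. exact Ha.
Qed.

Lemma regular_epi_iso_comp {A B D : C} (q : hom C A B) (m : hom C B D) (m' : hom C D B) :
  regular_epi q -> m \o m' = idm D -> m' \o m = idm B -> regular_epi (m \o q).
Proof.
  intros [E [u [v [Heq Hcoeq]]]] Hmm' Hm'm.
  exists E, u, v. split.
  { assoc_r. rewrite Heq. reflexivity. }
  intros Z z Hz. destruct (Hcoeq Z z Hz) as [w [Hw Huniq]].
  exists (w \o m'). split.
  - assoc_r. rewrite (comp_eq_r _ _ _ _ Hm'm), comp_id_l. exact Hw.
  - intros w' Hw'.
    rewrite <- (Huniq (w' \o m)), <- comp_assoc, Hmm', comp_id_r; [reflexivity|].
    rewrite <- comp_assoc. exact Hw'.
Qed.

Lemma is_product_ext {A B P Q : C} (p1 : hom C P A) (p2 : hom C P B) (u v : hom C Q P) :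
  is_product p1 p2 -> p1 \o u = p1 \o v -> p2 \o u = p2 \o v -> u = v.
Proof.
  intros HP H1 H2. destruct (HP _ (p1 \o u) (p2 \o u)) as [w [_ [_ Hw]]].
  rewrite (Hw u eq_refl eq_refl), (Hw v (eq_sym H1) (eq_sym H2)). reflexivity.
Qed.

Lemma is_product3_assoc {A B D P1 P : C} (a1 : hom C P1 A) (a2 : hom C P1 B)
    (c1 : hom C P P1) (c2 : hom C P D) :
  is_product a1 a2 -> is_product c1 c2 -> is_product3 (a1 \o c1) (a2 \o c1) c2.
Proof.
  intros H1 H2 Q q1 q2 q3.
  destruct (H1 Q q1 q2) as [u12 [Hu1 [Hu2 _]]].
  destruct (H2 Q u12 q3) as [u [Hc1 [Hc2 _]]].
  exists u. assoc_r. rewrite Hc1. repeat split; auto.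
  intros v Hv1 Hv2 Hv3. rewrite <- comp_assoc in Hv1, Hv2.
  apply (is_product_ext c1 c2); [exact H2| |congruence].
  rewrite Hc1. apply (is_product_ext a1 a2); [exact H1|congruence|congruence].
Qed.

Lemma product_map_ext {X Y PX PY T : C} (f : hom C X Y)
    (pi1 pi2 : hom C PX X) (rho1 rho2 : hom C PY Y) (ff : hom C PX PY) (a b : hom C T PX) :
  is_product rho1 rho2 -> rho1 \o ff = f \o pi1 -> rho2 \o ff = f \o pi2 ->
  f \o (pi1 \o a) = f \o (pi1 \o b) -> f \o (pi2 \o a) = f \o (pi2 \o b) -> ff \o a = ff \o b.
Proof.
  intros HP Hff1 Hff2 H1 H2. apply (is_product_ext rho1 rho2); [exact HP| |];
    rewrite !comp_assoc; [rewrite Hff1|rewrite Hff2]; assoc_r; assumption.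
Qed.

Lemma image_meet_sub {PX PY R S I FR FS FI J : C} (g : hom C PX PY)
    (r : hom C R PX) (s : hom C S PX) (i1 : hom C I R) (i2 : hom C I S)
    (er : hom C R FR) (mr : hom C FR PY) (es : hom C S FS) (ms : hom C FS PY)
    (ei : hom C I FI) (mi : hom C FI PY) (j1 : hom C J FR) (j2 : hom C J FS) :
  is_pullback r s i1 i2 -> regular_epi ei -> mi \o ei = g \o (r \o i1) ->
  mono mr -> mr \o er = g \o r -> mono ms -> ms \o es = g \o s ->
  is_pullback mr ms j1 j2 -> in_sub mi (mr \o j1).
Proof.
  intros HI Hei Emi Hmr Emr Hms Ems HJ.
  apply (in_sub_pullback mi mr ms j1 j2 HJ).
  - apply (in_sub_regular_epi_cancel ei mr mi Hei Hmr). exists (er \o i1).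
    rewrite comp_assoc, Emr, Emi. assoc_r. reflexivity.
  - apply (in_sub_regular_epi_cancel ei ms mi Hei Hms). exists (es \o i2).
    rewrite comp_assoc, Ems, Emi, (proj1 HI), comp_assoc. reflexivity.
Qed.

End Morphisms.

Section Spans.
Context {C : Category}.

(* Relations are handled as spans, not necessarily jointly monic, so that kernel pairs and
   relational composites need no image factorization. *)
Definition in_span {X W T : C} (a1 a2 : hom C W X) (x y : hom C T X) : Prop :=
  exists al : hom C T W, a1 \o al = x /\ a2 \o al = y.

Definition reflexive_span {X W : C} (a1 a2 : hom C W X) : Prop :=
  forall (T : C) (x : hom C T X), in_span a1 a2 x x.

Lemma in_span_comp {X W T T' : C} (a1 a2 : hom C W X) (x y : hom C T X) (e : hom C T' T) :
  in_span a1 a2 x y -> in_span a1 a2 (x \o e) (y \o e).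
Proof.
  intros [al [H1 H2]]. exists (al \o e).
  rewrite !comp_assoc, H1, H2. split; reflexivity.
Qed.

Lemma reflexive_rel_span {X PX R : C} (pi1 pi2 : hom C PX X) (r : hom C R PX) :
  reflexive_rel pi1 pi2 r -> reflexive_span (pi1 \o r) (pi2 \o r).
Proof.
  intros [d [Hd1 [Hd2 [dr Hdr]]]] T x. exists (dr \o x).
  assoc_r. rewrite (comp_eq_r _ _ _ _ Hdr), !comp_assoc, Hd1, Hd2, comp_id_l.
  split; reflexivity.
Qed.

Lemma in_span_meet {X PX R S I T : C} (pi1 pi2 : hom C PX X) (r : hom C R PX)
    (s : hom C S PX) (i1 : hom C I R) (i2 : hom C I S) (x y : hom C T X) :
  is_product pi1 pi2 -> is_pullback r s i1 i2 ->
  in_span (pi1 \o r) (pi2 \o r) x y -> in_span (pi1 \o s) (pi2 \o s) x y ->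
  in_span (pi1 \o (r \o i1)) (pi2 \o (r \o i1)) x y.
Proof.
  intros HP [_ Hpb] [al [Hal1 Hal2]] [be [Hbe1 Hbe2]].
  destruct (Hpb _ al be) as [h [Hh1 _]].
  { apply (is_product_ext pi1 pi2); [exact HP| |]; rewrite !comp_assoc; congruence. }
  exists h. assoc_r. rewrite Hh1, !comp_assoc. split; assumption.
Qed.

Lemma in_span_kernel_pair {X Y K T : C} (f : hom C X Y) (k1 k2 : hom C K X) (x y : hom C T X) :
  is_pullback f f k1 k2 -> (in_span k1 k2 x y <-> f \o x = f \o y).
Proof.
  intros [Ek Hk]. split.
  - intros [al [H1 H2]]. rewrite <- H1, <- H2, !comp_assoc, Ek. reflexivity.
  - intros H. destruct (Hk _ x y H) as [h [Hh1 [Hh2 _]]]. exists h. split; assumption.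
Qed.

End Spans.

Ltac rw_r H := first [rewrite (comp_eq_r _ _ _ _ H) | rewrite H].

Section Regular.
Context {C : Category}.
Hypothesis reg : regular_category C.

Lemma product_exists (A B : C) :
  exists (P : C) (p1 : hom C P A) (p2 : hom C P B), is_product p1 p2.
Proof. apply reg. Qed.

Lemma pullback_exists {A B D : C} (f : hom C A D) (g : hom C B D) :
  exists (P : C) (p1 : hom C P A) (p2 : hom C P B), is_pullback f g p1 p2.
Proof. apply reg. Qed.

Lemma regular_epi_pullback_stable {A B D P : C} (g : hom C A D) (e : hom C B D)
    (p1 : hom C P A) (p2 : hom C P B) :
  regular_epi e -> is_pullback g e p1 p2 -> regular_epi p1.
Proof. apply reg. Qed.

Lemma image_factorization {A B : C} (f : hom C A B) :
  exists (I : C) (e : hom C A I) (m : hom C I B), regular_epi e /\ mono m /\ m \o e = f.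
Proof. apply reg. Qed.

Lemma product3_exists (A B D : C) :
  exists (P : C) (p1 : hom C P A) (p2 : hom C P B) (p3 : hom C P D), is_product3 p1 p2 p3.
Proof.
  destruct (product_exists A B) as [P1 [a1 [a2 H1]]].
  destruct (product_exists P1 D) as [P [c1 [c2 H2]]].
  exists P, (a1 \o c1), (a2 \o c1), c2. exact (is_product3_assoc a1 a2 c1 c2 H1 H2).
Qed.

(* The image of [e2 \o e1] contains that of [e2], so its mono part is invertible. *)
Lemma regular_epi_comp {A B D : C} (e2 : hom C B D) (e1 : hom C A B) :
  regular_epi e2 -> regular_epi e1 -> regular_epi (e2 \o e1).
Proof.
  intros He2 He1.
  destruct (image_factorization (e2 \o e1)) as [I [q [m [Hq [Hm Hmq]]]]].
  destruct (regular_epi_mono_diagonal e1 m q e2 He1 Hm Hmq) as [d [Hmd _]].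
  destruct (regular_epi_mono_diagonal e2 m d (idm D) He2 Hm) as [m' [Hmm' _]].
  { rewrite comp_id_l. exact Hmd. }
  assert (Hm'm : m' \o m = idm I).
  { apply Hm. rewrite comp_assoc, Hmm', comp_id_l, comp_id_r. reflexivity. }
  rewrite <- Hmq. exact (regular_epi_iso_comp q m m' Hq Hmm' Hm'm).
Qed.

Lemma regular_epi_lift_locally {T W D : C} (q : hom C W D) (k : hom C T D) :
  regular_epi q ->
  exists (T' : C) (e : hom C T' T) (h : hom C T' W), regular_epi e /\ q \o h = k \o e.
Proof.
  intros Hq. destruct (pullback_exists k q) as [T' [e [h Hpb]]].
  exists T', e, h. split.
  - exact (regular_epi_pullback_stable k q e h Hq Hpb).
  - symmetry. apply Hpb.
Qed.

Lemma regular_epi_lift_locally2 {T A1 A2 D1 D2 : C} (q1 : hom C A1 D1) (q2 : hom C A2 D2)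
    (k1 : hom C T D1) (k2 : hom C T D2) :
  regular_epi q1 -> regular_epi q2 ->
  exists (T' : C) (e : hom C T' T) (h1 : hom C T' A1) (h2 : hom C T' A2),
    regular_epi e /\ q1 \o h1 = k1 \o e /\ q2 \o h2 = k2 \o e.
Proof.
  intros Hq1 Hq2.
  destruct (regular_epi_lift_locally q1 k1 Hq1) as [T1 [e1 [h1 [He1 E1]]]].
  destruct (regular_epi_lift_locally q2 (k2 \o e1) Hq2) as [T2 [e2 [h2 [He2 E2]]]].
  exists T2, (e1 \o e2), (h1 \o e2), h2. split; [exact (regular_epi_comp e1 e2 He1 He2)|].
  split.
  - rewrite comp_assoc, E1. assoc_r. reflexivity.
  - rewrite E2. assoc_r. reflexivity.
Qed.

Lemma wide_pullback4_exists {D A1 A2 A3 A4 : C} (f1 : hom C A1 D) (f2 : hom C A2 D)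
    (f3 : hom C A3 D) (f4 : hom C A4 D) :
  exists (W : C) (w1 : hom C W A1) (w2 : hom C W A2) (w3 : hom C W A3) (w4 : hom C W A4),
    f1 \o w1 = f2 \o w2 /\ f1 \o w1 = f3 \o w3 /\ f1 \o w1 = f4 \o w4 /\
    forall (T : C) (t1 : hom C T A1) (t2 : hom C T A2) (t3 : hom C T A3) (t4 : hom C T A4),
      f1 \o t1 = f2 \o t2 -> f1 \o t1 = f3 \o t3 -> f1 \o t1 = f4 \o t4 ->
      exists h, w1 \o h = t1 /\ w2 \o h = t2 /\ w3 \o h = t3 /\ w4 \o h = t4.
Proof.
  destruct (pullback_exists f1 f2) as [W1 [u1 [u2 [E1 U1]]]].
  destruct (pullback_exists (f1 \o u1) f3) as [W2 [v1 [v3 [E2 U2]]]].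
  destruct (pullback_exists (f1 \o (u1 \o v1)) f4) as [W [k1 [k4 [E3 U3]]]].
  exists W, (u1 \o (v1 \o k1)), (u2 \o (v1 \o k1)), (v3 \o k1), k4.
  assert (E1' : forall T (t : hom C T W1), f1 \o (u1 \o t) = f2 \o (u2 \o t)).
  { intros. rewrite !comp_assoc, E1. reflexivity. }
  split; [apply E1'|]. split; [rewrite !comp_assoc, E2; reflexivity|].
  split; [rewrite <- E3, !comp_assoc; reflexivity|].
  intros T t1 t2 t3 t4 F2 F3 F4.
  destruct (U1 _ t1 t2 F2) as [h1 [G11 [G12 _]]].
  destruct (U2 _ h1 t3) as [h2 [G21 [G23 _]]].
  { assoc_r. rewrite G11. exact F3. }
  destruct (U3 _ h2 t4) as [h [G31 [G34 _]]].
  { assoc_r. rewrite G21, G11. exact F4. }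
  exists h. assoc_r. rewrite G31, G21, G11, G12, G23, G34. repeat split.
Qed.

Lemma span_composite_exists {X WS WK : C} (s1 s2 : hom C WS X) (k1 k2 : hom C WK X) :
  exists (W : C) (c1 c2 : hom C W X),
    (forall (T : C) (x y z : hom C T X),
       in_span s1 s2 x y -> in_span k1 k2 y z -> in_span c1 c2 x z) /\
    (forall (T : C) (x z : hom C T X),
       in_span c1 c2 x z -> exists y, in_span s1 s2 x y /\ in_span k1 k2 y z).
Proof.
  destruct (pullback_exists s2 k1) as [W [l1 [l2 [El Hl]]]].
  exists W, (s1 \o l1), (k2 \o l2). split.
  - intros T x y z [al [Hal1 Hal2]] [be [Hbe1 Hbe2]].
    destruct (Hl _ al be) as [h [Hh1 [Hh2 _]]]; [congruence|].
    exists h. assoc_r. rewrite Hh1, Hh2. split; assumption.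
  - intros T x z [h [Hh1 Hh2]]. exists (s2 \o (l1 \o h)). split.
    + exists (l1 \o h). rewrite comp_assoc. split; [exact Hh1|reflexivity].
    + exists (l2 \o h). rewrite !comp_assoc, El. split; [reflexivity|exact Hh2].
Qed.

Lemma middle_point_relation_exists {X X2 P WA WB WC : C} (q1 q2 : hom C X2 X)
    (p1 : hom C P X) (p2 : hom C P X2) (p3 : hom C P X)
    (a1 a2 : hom C WA X) (b1 b2 : hom C WB X) (c1 c2 : hom C WC X) :
  is_product q1 q2 -> is_product3 p1 p2 p3 ->
  exists (W : C) (g : hom C W P),
    forall (T : C) (x1 x4 : hom C T X) (m : hom C T X2),
      in_rel3 p1 p2 p3 g x1 m x4 <->
      exists w, in_span a1 a2 (q1 \o m) w /\ in_span b1 b2 x1 w /\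
        in_span a1 a2 w (q2 \o m) /\ in_span c1 c2 w x4.
Proof.
  intros HX2 HP.
  destruct (wide_pullback4_exists a2 b2 a1 c1)
    as [W [wA [wB [wA' [wC [EB [EA' [EC HW]]]]]]]].
  destruct (HX2 W (a1 \o wA) (a2 \o wA')) as [mid [Hmid1 [Hmid2 _]]].
  destruct (HP W (b1 \o wB) mid (c2 \o wC)) as [g [Hg1 [Hg2 [Hg3 _]]]].
  exists W, g. intros T x1 x4 m. split.
  - intros [t [Ht1 [Ht2 [Ht3 [k Hk]]]]]. subst x1 m x4 t.
    exists (a2 \o (wA \o k)). repeat split.
    + exists (wA \o k). rw_r Hg2. rw_r Hmid1. assoc_r. split; reflexivity.
    + exists (wB \o k). rw_r Hg1. rewrite !comp_assoc, EB. split; reflexivity.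
    + exists (wA' \o k). rw_r Hg2. rw_r Hmid2. rewrite !comp_assoc, EA'. split; reflexivity.
    + exists (wC \o k). rw_r Hg3. rewrite !comp_assoc, EC. split; reflexivity.
  - intros [w [[al [Hal1 Hal2]] [[be [Hbe1 Hbe2]] [[al' [Hal'1 Hal'2]] [ga [Hga1 Hga2]]]]]].
    destruct (HW _ al be al' ga) as [h [Hh1 [Hh2 [Hh3 Hh4]]]]; try congruence.
    exists (g \o h). rw_r Hg1. rw_r Hg2. rw_r Hg3. assoc_r. rewrite Hh2, Hh4.
    split; [exact Hbe1|]. split; [|split; [exact Hga2|exists h; reflexivity]].
    apply (is_product_ext q1 q2); [exact HX2| |].
    + rw_r Hmid1. assoc_r. rewrite Hh1. exact Hal1.
    + rw_r Hmid2. assoc_r. rewrite Hh3. exact Hal'2.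
Qed.

End Regular.

Section Majority.
Context {C : Category}.
Hypothesis reg : regular_category C.
Hypothesis maj : majority_category C.

Lemma majority_image_locally {X Y Z P W T : C}
    (p1 : hom C P X) (p2 : hom C P Y) (p3 : hom C P Z) (g : hom C W P)
    (x x' : hom C T X) (y y' : hom C T Y) (z z' : hom C T Z) :
  is_product3 p1 p2 p3 ->
  in_rel3 p1 p2 p3 g x y z' -> in_rel3 p1 p2 p3 g x y' z -> in_rel3 p1 p2 p3 g x' y z ->
  exists (T' : C) (e : hom C T' T),
    regular_epi e /\ in_rel3 p1 p2 p3 g (x \o e) (y \o e) (z \o e).
Proof.
  intros HP Hxyz' Hxy'z Hx'yz.
  destruct (image_factorization reg g) as [I [q [m [Hq [Hm Hmq]]]]].
  assert (to_image : forall (a : hom C T X) (b : hom C T Y) (c : hom C T Z),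
    in_rel3 p1 p2 p3 g a b c -> in_rel3 p1 p2 p3 m a b c).
  { intros a b c [t [Ha [Hb [Hc Ht]]]]. exists t. repeat split; try assumption.
    rewrite <- Hmq in Ht. exact (in_sub_comp t m q Ht). }
  destruct (proj2 (proj2 maj) X Y Z P p1 p2 p3 HP I m Hm T x x' y y' z z'
              (to_image _ _ _ Hxyz') (to_image _ _ _ Hxy'z) (to_image _ _ _ Hx'yz))
    as [t [Ht1 [Ht2 [Ht3 [k Hk]]]]].
  destruct (regular_epi_lift_locally reg q k Hq) as [T' [e [h [He Hh]]]].
  exists T', e. split; [exact He|].
  exists (t \o e). rewrite !comp_assoc, Ht1, Ht2, Ht3. repeat split.
  exists h. rewrite <- Hmq, <- comp_assoc, Hh, comp_assoc, Hk. reflexivity.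
Qed.

Lemma majority_interpolation {X WA WB WC : C} (a1 a2 : hom C WA X) (b1 b2 : hom C WB X)
    (c1 c2 : hom C WC X) :
  reflexive_span a1 a2 -> reflexive_span b1 b2 -> reflexive_span c1 c2 ->
  forall (T : C) (x y z : hom C T X),
    in_span a1 a2 x z -> in_span b1 b2 x y -> in_span c1 c2 y z ->
    exists (T' : C) (e : hom C T' T) (w : hom C T' X), regular_epi e /\
      in_span a1 a2 (x \o e) w /\ in_span b1 b2 (x \o e) w /\
      in_span a1 a2 w (z \o e) /\ in_span c1 c2 w (z \o e).
Proof.
  intros rA rB rC T x y z Hxz Hxy Hyz.
  destruct (product_exists reg X X) as [X2 [q1 [q2 HX2]]].
  destruct (product3_exists reg X X2 X) as [P [p1 [p2 [p3 HP]]]].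
  destruct (middle_point_relation_exists reg q1 q2 p1 p2 p3 a1 a2 b1 b2 c1 c2 HX2 HP)
    as [W [g Hg]].
  destruct (HX2 T x z) as [xz [Hxz1 [Hxz2 _]]].
  destruct (HX2 T y y) as [yy [Hyy1 [Hyy2 _]]].
  destruct (majority_image_locally p1 p2 p3 g x z xz yy z x HP) as [T' [e [He Hrel]]].
  - apply Hg. exists x. rewrite Hxz1, Hxz2. auto.
  - apply Hg. exists y. rewrite Hyy1, Hyy2. auto.
  - apply Hg. exists z. rewrite Hxz1, Hxz2. auto.
  - destruct (proj1 (Hg _ _ _ _) Hrel) as [w [H1 [H2 [H3 H4]]]].
    rewrite comp_assoc, Hxz1 in H1. rewrite comp_assoc, Hxz2 in H3.
    exists T', e, w. auto.
Qed.

Lemma majority_meet_interpolation {X WR WS WK : C} (r1 r2 : hom C WR X)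
    (s1 s2 : hom C WS X) (k1 k2 : hom C WK X) :
  reflexive_span r1 r2 -> reflexive_span s1 s2 -> reflexive_span k1 k2 ->
  forall (T : C) (x y x' y' : hom C T X),
    in_span r1 r2 x y -> in_span k1 k2 x x' -> in_span s1 s2 x' y' -> in_span k1 k2 y' y ->
    exists (T' : C) (e : hom C T' T) (w u : hom C T' X), regular_epi e /\
      in_span k1 k2 (x \o e) w /\ in_span r1 r2 w u /\ in_span s1 s2 w u /\
      in_span k1 k2 u (y \o e).
Proof.
  intros rR rS rK T x y x' y' Hxy Hxx' Hx'y' Hy'y.
  destruct (span_composite_exists reg s1 s2 k1 k2) as [WSK [sk1 [sk2 [Hcomp Hdecomp]]]].
  assert (rSK : reflexive_span sk1 sk2).
  { intros T0 v. exact (Hcomp _ _ _ _ (rS _ v) (rK _ v)). }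
  destruct (majority_interpolation r1 r2 k1 k2 sk1 sk2 rR rK rSK T x x' y
              Hxy Hxx' (Hcomp _ _ _ _ Hx'y' Hy'y))
    as [T1 [e1 [w [He1 [_ [Hxw [Hwy Hwy']]]]]]].
  destruct (Hdecomp _ _ _ Hwy') as [v [Hwv Hvy]].
  destruct (majority_interpolation r1 r2 s1 s2 k1 k2 rR rS rK T1 w v (y \o e1) Hwy Hwv Hvy)
    as [T2 [e2 [u [He2 [Hwu [Hwu' [_ Huy]]]]]]].
  exists T2, (e1 \o e2), (w \o e2), u.
  rewrite !comp_assoc. repeat split; try assumption.
  - exact (regular_epi_comp reg e1 e2 He1 He2).
  - exact (in_span_comp k1 k2 _ _ e2 Hxw).
Qed.

Lemma majority_common_image_in_meet {X Y PX PY R S I T : C} (f : hom C X Y)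
    (pi1 pi2 : hom C PX X) (rho1 rho2 : hom C PY Y) (ff : hom C PX PY)
    (r : hom C R PX) (s : hom C S PX) (i1 : hom C I R) (i2 : hom C I S)
    (a : hom C T R) (b : hom C T S) :
  is_product pi1 pi2 -> is_product rho1 rho2 ->
  rho1 \o ff = f \o pi1 -> rho2 \o ff = f \o pi2 ->
  reflexive_rel pi1 pi2 r -> reflexive_rel pi1 pi2 s -> is_pullback r s i1 i2 ->
  ff \o (r \o a) = ff \o (s \o b) ->
  exists (T' : C) (e : hom C T' T) (m : hom C T' I),
    regular_epi e /\ ff \o (r \o (i1 \o m)) = ff \o (r \o (a \o e)).
Proof.
  intros HPX HPY Hff1 Hff2 HR HS HI Eab.
  assert (Hf1 : forall (T0 : C) (t : hom C T0 PX), f \o (pi1 \o t) = rho1 \o (ff \o t)).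
  { intros. rewrite !comp_assoc, Hff1. reflexivity. }
  assert (Hf2 : forall (T0 : C) (t : hom C T0 PX), f \o (pi2 \o t) = rho2 \o (ff \o t)).
  { intros. rewrite !comp_assoc, Hff2. reflexivity. }
  destruct (pullback_exists reg f f) as [K [k1 [k2 HK]]].
  assert (rK : reflexive_span k1 k2).
  { intros T0 v. apply (in_span_kernel_pair f k1 k2 _ _ HK). reflexivity. }
  destruct (majority_meet_interpolation (pi1 \o r) (pi2 \o r) (pi1 \o s) (pi2 \o s) k1 k2
              (reflexive_rel_span _ _ _ HR) (reflexive_rel_span _ _ _ HS) rK T
              (pi1 \o (r \o a)) (pi2 \o (r \o a)) (pi1 \o (s \o b)) (pi2 \o (s \o b)))
    as [T' [e [w [u [He [Hxw [Hwu_r [Hwu_s Huy]]]]]]]].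
  - exists a. rewrite !comp_assoc. split; reflexivity.
  - apply (in_span_kernel_pair f k1 k2 _ _ HK). rewrite !Hf1, Eab. reflexivity.
  - exists b. rewrite !comp_assoc. split; reflexivity.
  - apply (in_span_kernel_pair f k1 k2 _ _ HK). rewrite !Hf2, Eab. reflexivity.
  - apply (in_span_kernel_pair f k1 k2 _ _ HK) in Hxw, Huy.
    destruct (in_span_meet pi1 pi2 r s i1 i2 w u HPX HI Hwu_r Hwu_s) as [m [Hm1 Hm2]].
    exists T', e, m. split; [exact He|].
    rewrite <- !comp_assoc in Hm1, Hm2, Hxw, Huy.
    apply (product_map_ext f pi1 pi2 rho1 rho2 ff _ _ HPY Hff1 Hff2).
    + rewrite Hm1, Hxw. reflexivity.
    + rewrite Hm2, Huy. reflexivity.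
Qed.

End Majority.

Theorem corollary3p5 (C : Category) :
  regular_category C -> majority_category C ->
  forall (X Y : C) (f : hom C X Y), regular_epi f ->
  forall (PX : C) (pi1 pi2 : hom C PX X), is_product pi1 pi2 ->
  forall (PY : C) (rho1 rho2 : hom C PY Y), is_product rho1 rho2 ->
  forall ff : hom C PX PY, rho1 \o ff = f \o pi1 -> rho2 \o ff = f \o pi2 ->
  forall (R : C) (r : hom C R PX), mono r -> reflexive_rel pi1 pi2 r ->
  forall (S : C) (s : hom C S PX), mono s -> reflexive_rel pi1 pi2 s ->
  (* R /\ S, as the pullback of r and s, represented by r o i1 *)
  forall (I : C) (i1 : hom C I R) (i2 : hom C I S), is_pullback r s i1 i2 ->
  (* f(R), f(S), f(R /\ S): images under f x f *)
  forall (FR : C) (er : hom C R FR) (mr : hom C FR PY),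
    regular_epi er -> mono mr -> mr \o er = ff \o r ->
  forall (FS : C) (es : hom C S FS) (ms : hom C FS PY),
    regular_epi es -> mono ms -> ms \o es = ff \o s ->
  forall (FI : C) (ei : hom C I FI) (mi : hom C FI PY),
    regular_epi ei -> mi \o ei = ff \o (r \o i1) -> mono mi ->
  (* f(R) /\ f(S), as the pullback of mr and ms, represented by mr o j1 *)
  forall (J : C) (j1 : hom C J FR) (j2 : hom C J FS), is_pullback mr ms j1 j2 ->
  same_sub mi (mr \o j1).
Proof.
  intros reg maj X Y f _ PX pi1 pi2 HPX PY rho1 rho2 HPY ff Hff1 Hff2
    R r _ HR S s _ HS I i1 i2 HI FR er mr Her Hmr Emr FS es ms Hes Hms Ems
    FI ei mi Hei Emi Hmi J j1 j2 HJ.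
  split; [exact (image_meet_sub ff r s i1 i2 er mr es ms ei mi j1 j2
                   HI Hei Emi Hmr Emr Hms Ems HJ)|].
  destruct (regular_epi_lift_locally2 reg er es j1 j2 Her Hes)
    as [T [c [a [b [Hc [Ea Eb]]]]]].
  assert (Ec : mr \o (j1 \o c) = ff \o (r \o a)).
  { rewrite <- Ea, comp_assoc, Emr, comp_assoc. reflexivity. }
  assert (Eab : ff \o (r \o a) = ff \o (s \o b)).
  { rewrite <- Ec, comp_assoc, (proj1 HJ), <- comp_assoc, <- Eb, !comp_assoc, Ems.
    reflexivity. }
  destruct (majority_common_image_in_meet reg maj f pi1 pi2 rho1 rho2 ff r s i1 i2 a b
              HPX HPY Hff1 Hff2 HR HS HI Eab) as [T' [e [m [He Em]]]].
  apply (in_sub_regular_epi_cancel (c \o e) mi (mr \o j1)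
           (regular_epi_comp reg c e Hc He) Hmi).
  exists (ei \o m).
  rewrite comp_assoc, Emi. assoc_r.
  rewrite Em, (comp_assoc _ _ _ _ _ j1 c e), (comp_eq_r _ _ _ _ Ec). assoc_r. reflexivity.
Qed.
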